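(* Let $p$ be a prime, let $m\ge 0$ be an integer, and let $f:\mathbb{Z}_p\to\mathbb{Z}_p$ be an analytic function of level $m$. Then $f$ is an arithmetic differential operator of order $m$.
   Context: $\mathbb{Z}_p$ denotes the ring of $p$-adic integers with the $p$-adic norm $|\cdot|_p$, $|p|_p=p^{-1}$. The Fermat quotient operator is $\delta:\mathbb{Z}_p\to\mathbb{Z}_p$, $\delta a=(a-a^p)/p$, and $\delta^i$ denotes its $i$-th iterate. A power series $F=\sum_{\alpha} a_\alpha x^\alpha\in\mathbb{Z}_p[[x_0,\dots,x_k]]$ is called restricted if $a_\alpha\to 0$ $p$-adically as $|\alpha|=\alpha_0+\dots+\alpha_k\to\infty$. A function $f:\mathbb{Z}_p\to\mathbb{Z}_p$ is an arithmetic differential operator of order $m$ if there is a restricted power series $F\in\mathbb{Z}_p[[x_0,\dots,x_m]]$ with $f(a)=F(a,\delta a,\dots,\delta^m a)$ for all $a\in\mathbb{Z}_p$. A function $f:\mathbb{Z}_p\to\mathbb{Z}_p$ is analytic of level $m$ if for every $a\in\mathbb{Z}_p$ there is a restricted power series $F_a\in\mathbb{Z}_p[[x]]$ (one variable) such that $f(a+p^m u)=F_a(u)$ for all $u\in\mathbb{Z}_p$. *)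

(* The ring Z_p of p-adic integers is built concretely as the
   inverse limit of Z/p^n Z: an element is a coherent family of residues
   x_n in [0, p^n) with x_{n+1} = x_n (mod p^n). *)
From mathcomp Require Import all_boot.
From mathcomp Require Import zify.

Set Implicit Arguments.
Unset Strict Implicit.
Unset Printing Implicit Defensive.

Section Padic.
Variable p : nat.

Record Zp := MkZp {
  zval : nat -> nat;
  zbound : forall n, zval n < p ^ n;
  zcompat : forall n, zval n.+1 %% p ^ n = zval n }.

Lemma zp_pos (x : Zp) : 0 < p.
Proof. by have := zbound x 1; rewrite expn1; case: p. Qed.

Definition mk (hp : 0 < p) (g : nat -> nat)
  (hg : forall n, g n.+1 = g n %[mod p ^ n]) : Zp.
Proof.
refine (@MkZp (fun n => g n %% p ^ n) _ _).
- by move=> n; rewrite ltn_pmod // expn_gt0 hp.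
- move=> n; rewrite modn_dvdm; first exact: hg.
  by rewrite (dvdn_exp2l p (leqnSn n)).
Defined.

Definition zadd (x y : Zp) : Zp.
Proof.
refine (@mk (zp_pos x) (fun n => zval x n + zval y n) _).
by move=> n; rewrite -modnDm !zcompat.
Defined.

Definition zmul (x y : Zp) : Zp.
Proof.
refine (@mk (zp_pos x) (fun n => zval x n * zval y n) _).
by move=> n; rewrite -modnMm !zcompat.
Defined.

Lemma predexpS (hp : 0 < p) n : (p ^ n.+1).-1 = (p.-1 * p ^ n) + (p ^ n).-1.
Proof.
have hn : 0 < p ^ n by rewrite expn_gt0 hp.
rewrite expnS; case: p hp hn => // q _ hn /=.
rewrite mulSn; lia.
Qed.

(** additive inverse: multiplication by -1 = (p^n - 1)_n *)
Definition zopp (x : Zp) : Zp.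
Proof.
refine (@mk (zp_pos x) (fun n => zval x n * (p ^ n).-1) _).
move=> n; rewrite -modnMm zcompat predexpS ?(zp_pos x) //.
by rewrite modnMDl modnMmr.
Defined.

Definition zsub (x y : Zp) : Zp := zadd x (zopp y).

Definition zone (x : Zp) : Zp := @mk (zp_pos x) (fun _ => 1) (fun _ => erefl).

(** the natural number c viewed in Z_p (x only witnesses p > 0) *)
Definition zofnat (x : Zp) (c : nat) : Zp :=
  @mk (zp_pos x) (fun _ => c) (fun _ => erefl).

Definition zpow (x : Zp) (k : nat) : Zp := iter k (zmul x) (zone x).

Lemma div_mod_shift (hp : 0 < p) a n :
  (a %% p ^ n.+1) %/ p = a %/ p %[mod p ^ n].
Proof.
rewrite {2}(divn_eq a (p ^ n.+1)) expnSr mulnA divnMDl //.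
by rewrite modnMDl.
Qed.

(** floor division by p: (x / p)_n = x_{n+1} div p; exact when p | x *)
Definition zshift (x : Zp) : Zp.
Proof.
refine (@mk (zp_pos x) (fun n => zval x n.+1 %/ p) _).
move=> n; rewrite -(zcompat x n.+1).
by rewrite div_mod_shift // (zp_pos x).
Defined.

Definition delta (a : Zp) : Zp := zshift (zsub a (zpow a p)).

Definition restricted1 (c : nat -> Zp) : Prop :=
  forall n, exists N, forall j, N <= j -> zval (c j) n = 0.

Definition eval1 (c : nat -> Zp) (u y : Zp) : Prop :=
  forall n, exists N, forall M, N <= M ->
    zval y n = (\sum_(j < M) zval (c j) n * zval u n ^ j) %% p ^ n.

Definition mdeg (k : nat) (alpha : {ffun 'I_k.+1 -> nat}) : nat :=
  \sum_(i < k.+1) alpha i.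

Definition restricted (k : nat) (F : {ffun 'I_k.+1 -> nat} -> Zp) : Prop :=
  forall n, exists N, forall alpha, N <= mdeg alpha -> zval (F alpha) n = 0.

Definition eval (k : nat) (F : {ffun 'I_k.+1 -> nat} -> Zp)
    (xs : 'I_k.+1 -> Zp) (y : Zp) : Prop :=
  forall n, exists N, forall M, N <= M ->
    zval y n =
      (\sum_(alpha : {ffun 'I_k.+1 -> 'I_M.+1} | \sum_(i < k.+1) (alpha i : nat) <= M)
          zval (F [ffun i => nat_of_ord (alpha i)]) n *
          \prod_(i < k.+1) zval (xs i) n ^ (alpha i)) %% p ^ n.

Definition arith_diff_op (m : nat) (f : Zp -> Zp) : Prop :=
  exists F : {ffun 'I_m.+1 -> nat} -> Zp,
    restricted F /\
    forall a : Zp, eval F (fun i : 'I_m.+1 => iter i delta a) (f a).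

Definition analytic_level (m : nat) (f : Zp -> Zp) : Prop :=
  forall a : Zp, exists c : nat -> Zp,
    restricted1 c /\
    forall u : Zp, eval1 c u (f (zadd a (zmul (zofnat a (p ^ m)) u))).

End Padic.

(* Write a = r + p^m u with 0 <= r < p^m.  Membership of a in the ball r + p^m Z_p is
   decided by the residues mod p of a, delta a, ..., delta^(m-1) a; the indicator of
   "delta^i a = delta^i r mod p" is 1 - (delta^i a - delta^i r)^(p-1) mod p, and Newton's
   idempotent iteration lifts it to any p-adic precision, as a polynomial in the delta^j a.
   Inside the ball, u is recovered to any precision as a polynomial in a, ..., delta^m a
   from delta (c + p^(h+1) u) = delta c + p^h (u - p V(u)).  Summing, over r, the ball
   indicator times the truncated expansion of f around r evaluated at u gives polynomials
   Q_n with Q_n(a, ..., delta^m a) = f a mod p^n and Q_(n+1) = Q_n mod p^n coefficientwise;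
   their coefficientwise limit is the required restricted power series. *)

From HB Require Import structures.
From mathcomp Require Import all_boot all_algebra.
From mathcomp Require Import boolp ring.
From mathcomp Require Import mpoly.
From Pilot Require Import Defs.

Set Implicit Arguments.
Unset Strict Implicit.
Unset Printing Implicit Defensive.

Import GRing.Theory.

Local Open Scope ring_scope.

(** * Congruences modulo powers of p *)

Definition pcong (p : nat) (R : pzRingType) (k : nat) (x y : R) :=
  exists z, x - y = (p ^ k)%:R * z.

Section Congruence.
Variables (p : nat) (R : comNzRingType).
Implicit Types x y z : R.
Local Notation pcong := (@pcong p R).

Lemma pcong_refl k x : pcong k x x.
Proof. by exists 0; rewrite subrr mulr0. Qed.

Lemma pcong_eq k x y : x = y -> pcong k x y.
Proof. by move=> ->; apply: pcong_refl. Qed.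

Lemma pcong_sym k x y : pcong k x y -> pcong k y x.
Proof. by case=> z e; exists (- z); rewrite mulrN -e opprB. Qed.

Lemma pcong_trans k x y z : pcong k x y -> pcong k y z -> pcong k x z.
Proof. by case=> a ea [b eb]; exists (a + b); rewrite mulrDr -ea -eb addrA subrK. Qed.

Lemma pcong_subr k x y : pcong k x y <-> pcong k (x - y) 0.
Proof. by rewrite /pcong subr0. Qed.

Lemma pcongD k x y x' y' : pcong k x y -> pcong k x' y' -> pcong k (x + x') (y + y').
Proof. by case=> a ea [b eb]; exists (a + b); rewrite mulrDr -ea -eb opprD addrACA. Qed.

Lemma pcongN k x y : pcong k x y -> pcong k (- x) (- y).
Proof. by case=> a ea; exists (- a); rewrite mulrN -ea; ring. Qed.

Lemma pcongB k x y x' y' : pcong k x y -> pcong k x' y' -> pcong k (x - x') (y - y').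
Proof. by move=> h1 h2; apply: pcongD h1 (pcongN h2). Qed.

Lemma pcongM k x y x' y' : pcong k x y -> pcong k x' y' -> pcong k (x * x') (y * y').
Proof.
case=> a ea [b eb]; exists (a * x' + y * b).
have -> : x * x' - y * y' = (x - y) * x' + y * (x' - y') by ring.
by rewrite ea eb; ring.
Qed.

Lemma pcongX k x y n : pcong k x y -> pcong k (x ^+ n) (y ^+ n).
Proof.
move=> h; elim: n => [|n IH]; first by rewrite !expr0; apply: pcong_refl.
by rewrite !exprS; apply: pcongM.
Qed.

Lemma pcong_sum k (I : Type) (r : seq I) (P : pred I) (F G : I -> R) :
  (forall i, P i -> pcong k (F i) (G i)) ->
  pcong k (\sum_(i <- r | P i) F i) (\sum_(i <- r | P i) G i).
Proof.
move=> h; elim/big_rec2: _ => [|i y1 y2 Pi IH]; first exact: pcong_refl.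
by apply: pcongD => //; apply: h.
Qed.

Lemma pcong_sum0 k (I : Type) (r : seq I) (P : pred I) (F : I -> R) :
  (forall i, P i -> pcong k (F i) 0) -> pcong k (\sum_(i <- r | P i) F i) 0.
Proof. by move=> h; have := pcong_sum r h; rewrite big1_eq. Qed.

Lemma pcong_prod k (I : Type) (r : seq I) (P : pred I) (F G : I -> R) :
  (forall i, P i -> pcong k (F i) (G i)) ->
  pcong k (\prod_(i <- r | P i) F i) (\prod_(i <- r | P i) G i).
Proof.
move=> h; elim/big_rec2: _ => [|i y1 y2 Pi IH]; first exact: pcong_refl.
by apply: pcongM => //; apply: h.
Qed.

Lemma pcong_mul0l k x y : pcong k x 0 -> pcong k (x * y) 0.
Proof. by move=> h; have := pcongM h (pcong_refl k y); rewrite mul0r. Qed.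

Lemma pcong0 x y : pcong 0 x y.
Proof. by exists (x - y); rewrite expn0 mul1r. Qed.

Lemma pcong_leq j k x y : (j <= k)%N -> pcong k x y -> pcong j x y.
Proof.
move=> /subnK <- [a ea]; exists ((p ^ (k - j))%:R * a).
by rewrite ea expnD natrM mulrA [X in X * _]mulrC.
Qed.

Lemma pcong_mulp k x y : pcong k x y -> pcong k.+1 (p%:R * x) (p%:R * y).
Proof. by case=> a ea; exists a; rewrite -mulrBr ea expnS natrM mulrA. Qed.

Lemma pcong_mulpX k z : pcong k ((p ^ k)%:R * z) 0.
Proof. by exists z; rewrite subr0. Qed.

End Congruence.

Lemma pcong_rmorph (p : nat) (R S : comNzRingType) (f : {rmorphism R -> S}) k x y :
  pcong p k x y -> pcong p k (f x) (f y).
Proof. by case=> a ea; exists (f a); rewrite -rmorphB ea rmorphM rmorph_nat. Qed.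

Lemma sum_ord_cat (R : nzRingType) (F : nat -> R) a b : (a <= b)%N ->
  \sum_(j < b) F j = \sum_(j < a) F j + \sum_(a <= j < b) F j.
Proof. by move=> hab; rewrite -!(big_mkord xpredT F) (big_cat_nat (leq0n a) hab). Qed.

Lemma modn_prodm (I : Type) (r : seq I) (P : pred I) (F : I -> nat) d :
  ((\prod_(i <- r | P i) (F i %% d)) %% d = (\prod_(i <- r | P i) F i) %% d)%N.
Proof.
elim/big_rec2: _ => // i x y _ IH.
by rewrite -modnMm IH modnMm modnMml.
Qed.

(** * Polynomial identities behind the Fermat quotient *)

Definition binom_carry (q : nat) (R : comNzRingType) (x y : R) :=
  \sum_(i < q.-1) (x ^+ (q - i.+1) * y ^+ i.+1) *+ ('C(q, i.+1) %/ q).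

Lemma exprD_prime (q : nat) (R : comNzRingType) (x y : R) : prime q ->
  (x + y) ^+ q = x ^+ q + y ^+ q + q%:R * binom_carry q x y.
Proof.
case: q => // n pn; rewrite /binom_carry /=.
rewrite exprDn big_ord_recl subn0 expr0 mulr1 bin0 mulr1n.
rewrite big_ord_recr /= subnn expr0 mul1r binn mulr1n.
rewrite -addrA; congr (_ + _); rewrite addrC /bump /= add1n; congr (_ + _).
rewrite mulr_sumr; apply: eq_bigr => i _; rewrite /bump /= add1n.
have hi : (0 < i.+1 < n.+1)%N by rewrite /= ltnS ltn_ord.
by rewrite -{1}(divnK (prime_dvd_bin pn hi)) mulrnA mulr_natl.
Qed.

Lemma rmorph_binom_carry (q : nat) (R S : comNzRingType) (f : {rmorphism R -> S}) (x y : R) :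
  f (binom_carry q x y) = binom_carry q (f x) (f y).
Proof.
rewrite /binom_carry rmorph_sum; apply: eq_bigr => j _.
by rewrite rmorphMn rmorphM !rmorphXn.
Qed.

Section DeltaCorrection.
Variable p : nat.

Definition dcorr_coef (g j : nat) := (('C(p, j.+1) * p ^ (g * j)) %/ p)%N.

(* [delta (c + p^g u) = delta c + p^(g-1) (u - p * dcorr c g u)]: see [deltaD_pX]. *)
Definition dcorr (R : comNzRingType) (c : R) (g : nat) (u : R) :=
  u * \sum_(j < p) (c ^+ (p - j.+1) *+ dcorr_coef g j) * u ^+ j.

Lemma dcorr_coefE g j : (0 < g)%N -> (j < p)%N ->
  ('C(p, j.+1) * p ^ (g * j) = p * dcorr_coef g j)%N.
Proof.
move=> g0 jp; rewrite /dcorr_coef [RHS]mulnC divnK //.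
case: j jp => [|j] jp; first by rewrite bin1 muln0 expn0 muln1.
by apply: dvdn_mull; rewrite -{1}(expn1 p) dvdn_exp2l // muln_gt0 g0.
Qed.

Lemma rmorph_dcorr (R S : comNzRingType) (f : {rmorphism R -> S}) (c : R) g u :
  f (dcorr c g u) = dcorr (f c) g (f u).
Proof.
rewrite /dcorr rmorphM rmorph_sum; congr (_ * _); apply: eq_bigr => j _.
by rewrite rmorphM rmorphMn !rmorphXn.
Qed.

Variable R : comNzRingType.

Lemma pcong_dcorr k (c : R) g u u' : pcong p k u u' -> pcong p k (dcorr c g u) (dcorr c g u').
Proof.
move=> h; apply: pcongM => //; apply: pcong_sum => j _.
by apply: pcongM; [apply: pcong_refl | apply: pcongX].
Qed.

(* [dcorr c g] vanishes at [0], so [u |-> p * dcorr c g u] contracts p-adically. *)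
Lemma pcong0_contract N (c : R) g u : pcong p N (u - p%:R * dcorr c g u) 0 -> pcong p N u 0.
Proof.
move=> h; suff : forall s, (s <= N)%N -> pcong p s u 0 by apply.
elim=> [|s IH] hs; first exact: pcong0.
have hV : pcong p s.+1 (p%:R * dcorr c g u) 0.
  by have := pcong_mulp (pcong_dcorr c g (IH (ltnW hs))); rewrite /dcorr !mul0r mulr0.
by have := pcongD (pcong_leq hs h) hV; rewrite subrK addr0.
Qed.

End DeltaCorrection.

(* Newton iteration [E |-> E - (2E - 1)(E^2 - E)] for idempotents, with the defect [H],
   where [E^2 - E = p^(2^k) H], carried along formally: over the polynomial ring [E^2 - E]
   is divisible by [p] only after evaluation at a jet, yet consecutive iterates must agree
   modulo [p^(2^k)] as polynomials. *)
Section Newton.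
Variables (p : nat) (R : comNzRingType).

Definition newton_mod k : R := (p ^ (2 ^ k))%:R.

Fixpoint newton (E0 H0 : R) k : R * R :=
  if k is k'.+1 then
    let: (E, H) := newton E0 H0 k' in
    (E - (2%:R * E - 1) * newton_mod k' * H, H * H * (4%:R * newton_mod k' * H - 3%:R))
  else (E0, H0).

Lemma newton_mod0 : newton_mod 0 = p%:R.
Proof. by rewrite /newton_mod expn0 expn1. Qed.

Lemma newton_modS k : newton_mod k.+1 = newton_mod k * newton_mod k.
Proof. by rewrite /newton_mod expnS mul2n -addnn expnD natrM. Qed.

Lemma newton_rel E0 H0 k : E0 * E0 - E0 = p%:R * H0 ->
  let: (E, H) := newton E0 H0 k in E * E - E = newton_mod k * H.
Proof.
move=> h0; elim: k => [|k] /=; first by rewrite newton_mod0.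
case: (newton E0 H0 k) => E H IH; rewrite newton_modS; set s := newton_mod k.
set E' := E - _.
have -> : E' * E' - E' = (E * E - E) - (4%:R * (E * E - E) + 1) * s * H
                         + (4%:R * (E * E - E) + 1) * s * s * H * H by rewrite /E'; ring.
by rewrite IH; ring.
Qed.

Lemma newton_pcongS E0 H0 k : pcong p (2 ^ k) (newton E0 H0 k.+1).1 (newton E0 H0 k).1.
Proof.
rewrite /=; case: (newton E0 H0 k) => E H /=.
by exists (- ((2%:R * E - 1) * H)); rewrite /newton_mod; ring.
Qed.

Lemma newton_pcong_init E0 H0 k : pcong p 1 (newton E0 H0 k).1 E0.
Proof.
elim: k => [|k IH]; first exact: pcong_refl.
apply: pcong_trans IH; apply: (@pcong_leq _ _ 1 (2 ^ k)); first by rewrite expn_gt0.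
exact: newton_pcongS.
Qed.

Lemma newton_pcong E0 H0 k : pcong p k (newton E0 H0 k.+1).1 (newton E0 H0 k).1.
Proof. exact: pcong_leq (ltnW (ltn_expl k (ltnSn 1))) (newton_pcongS _ _ _). Qed.

End Newton.

Lemma rmorph_newton (p : nat) (R S : comNzRingType) (f : {rmorphism R -> S}) E0 H0 k :
  f (newton p E0 H0 k).1 = (newton p (f E0) (f H0) k).1.
Proof.
suff -> : newton p (f E0) (f H0) k = (f (newton p E0 H0 k).1, f (newton p E0 H0 k).2) by [].
elim: k => [|k IH] //=; rewrite IH; case: (newton p E0 H0 k) => E H /=.
by rewrite /newton_mod !(rmorphB, rmorphD, rmorphM, rmorph_nat, rmorph1).
Qed.

(** * The ring of p-adic integers *)

Section PadicIntegers.
Variable p : nat.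
Hypothesis p_prime : prime p.
Local Notation ZP := (Zp p).
Local Notation delta := (@delta p).

Lemma p_gt0 : (0 < p)%N. Proof. exact: prime_gt0. Qed.
Lemma expp_gt0 n : (0 < p ^ n)%N. Proof. by rewrite expn_gt0 p_gt0. Qed.

Lemma zp_ext (x y : ZP) : zval x =1 zval y -> x = y.
Proof.
case: x y => [fx bx cx] [fy by_ cy] /= /funext e; subst fy.
by congr MkZp; apply: Prop_irrelevance.
Qed.

Lemma zval_mod (x : ZP) n : (zval x n %% p ^ n)%N = zval x n.
Proof. by rewrite modn_small // zbound. Qed.

Lemma zval_leq (x : ZP) k j : (k <= j)%N -> (zval x j %% p ^ k)%N = zval x k.
Proof.
move=> /subnK <-; elim: (j - k)%N => [|d IH]; first by rewrite add0n zval_mod.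
rewrite addSn -(@modn_dvdm (p ^ (d + k))) ?zcompat ?IH //.
by rewrite dvdn_exp2l // leq_addl.
Qed.

Definition zzero : ZP := @mk p p_gt0 (fun _ => 0%N) (fun _ => erefl).
Definition zunit : ZP := @mk p p_gt0 (fun _ => 1%N) (fun _ => erefl).

Lemma zaddA : associative (@zadd p).
Proof. by move=> x y z; apply: zp_ext => n /=; rewrite modnDml modnDmr addnA. Qed.
Lemma zaddC : commutative (@zadd p).
Proof. by move=> x y; apply: zp_ext => n /=; rewrite addnC. Qed.
Lemma zadd0 : left_id zzero (@zadd p).
Proof. by move=> x; apply: zp_ext => n /=; rewrite mod0n add0n zval_mod. Qed.
Lemma zaddN : left_inverse zzero (@zopp p) (@zadd p).
Proof.
move=> x; apply: zp_ext => n /=; rewrite modnDml mod0n.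
by rewrite -{2}(muln1 (zval x n)) -mulnDr addn1 prednK ?expp_gt0 // modnMl.
Qed.

HB.instance Definition _ := gen_eqMixin ZP.
HB.instance Definition _ := gen_choiceMixin ZP.
HB.instance Definition _ := GRing.isZmodule.Build ZP zaddA zaddC zadd0 zaddN.

Lemma zmulA : associative (@zmul p).
Proof. by move=> x y z; apply: zp_ext => n /=; rewrite modnMml modnMmr mulnA. Qed.
Lemma zmulC : commutative (@zmul p).
Proof. by move=> x y; apply: zp_ext => n /=; rewrite mulnC. Qed.
Lemma zmul1 : left_id zunit (@zmul p).
Proof. by move=> x; apply: zp_ext => n /=; rewrite modnMml mul1n zval_mod. Qed.
Lemma zmulDl : left_distributive (@zmul p) (@zadd p).
Proof. by move=> x y z; apply: zp_ext => n /=; rewrite modnMml modnDm mulnDl. Qed.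
Lemma zunit_neq0 : zunit != zzero.
Proof.
apply/eqP => /(congr1 (fun x => zval x 1)) /=; rewrite expn1 mod0n modn_small //.
exact: prime_gt1.
Qed.

HB.instance Definition _ :=
  GRing.Zmodule_isComNzRing.Build ZP zmulA zmulC zmul1 zmulDl zunit_neq0.

Lemma zvalD (x y : ZP) n : zval (x + y) n = ((zval x n + zval y n) %% p ^ n)%N.
Proof. by []. Qed.
Lemma zvalM (x y : ZP) n : zval (x * y) n = ((zval x n * zval y n) %% p ^ n)%N.
Proof. by []. Qed.
Lemma zvalN (x : ZP) n : zval (- x) n = ((zval x n * (p ^ n).-1) %% p ^ n)%N.
Proof. by []. Qed.
Lemma zval0 n : zval (0 : ZP) n = 0%N.
Proof. by rewrite /= mod0n. Qed.
Lemma zval1 n : zval (1 : ZP) n = (1 %% p ^ n)%N.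
Proof. by []. Qed.

Lemma zval_nat (c : nat) n : zval (c%:R : ZP) n = (c %% p ^ n)%N.
Proof.
elim: c => [|c IH]; first by rewrite zval0 mod0n.
by rewrite -addn1 natrD zvalD IH zval1 modnDm.
Qed.

Lemma zval_sum (I : Type) (r : seq I) (P : pred I) (F : I -> ZP) n :
  zval (\sum_(i <- r | P i) F i) n = ((\sum_(i <- r | P i) zval (F i) n) %% p ^ n)%N.
Proof.
elim/big_rec2: _ => [|i y1 y2 _ IH]; first by rewrite zval0 mod0n.
by rewrite zvalD IH modnDmr.
Qed.

Lemma zval_prod (I : Type) (r : seq I) (P : pred I) (F : I -> ZP) n :
  zval (\prod_(i <- r | P i) F i) n = ((\prod_(i <- r | P i) zval (F i) n) %% p ^ n)%N.
Proof.
elim/big_rec2: _ => [|i y1 y2 _ IH]; first by rewrite zval1.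
by rewrite zvalM IH modnMmr.
Qed.

Lemma zvalX (x : ZP) k n : zval (x ^+ k) n = (zval x n ^ k %% p ^ n)%N.
Proof.
elim: k => [|k IH]; first by rewrite expr0 zval1.
by rewrite exprS zvalM IH modnMmr expnS.
Qed.

Lemma zval_shift (x : ZP) n : zval (zshift x) n = ((zval x n.+1 %/ p) %% p ^ n)%N.
Proof. by []. Qed.

Lemma zoneE (a : ZP) : zone a = 1.
Proof. exact: zp_ext. Qed.

Lemma zpowE (a : ZP) k : zpow a k = a ^+ k.
Proof.
rewrite /zpow; elim: k => [|k IH]; first by rewrite zoneE.
by rewrite iterS IH exprS.
Qed.

Lemma zofnatE (a : ZP) c : zofnat a c = c%:R.
Proof. by apply: zp_ext => n; rewrite zval_nat. Qed.

Local Notation pcong := (@pcong p _).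

Lemma zval_sub0 (x y : ZP) k : zval x k = zval y k -> zval (x - y) k = 0%N.
Proof.
move=> e; rewrite zvalD zvalN e modnDmr.
by rewrite -{1}(muln1 (zval y k)) -mulnDr add1n prednK ?expp_gt0 // modnMl.
Qed.

Lemma mulp_shift (x : ZP) : zval x 1 = 0%N -> p%:R * zshift x = x.
Proof.
move=> h; apply: zp_ext => n; rewrite zvalM zval_shift zval_nat modnMml modnMmr.
have dx : (p %| zval x n.+1)%N.
  by rewrite /dvdn; have := zval_leq x (ltn0Sn n); rewrite expn1 h => ->.
by rewrite mulnC divnK // zcompat.
Qed.

Lemma zval0_dvd k (w : ZP) : zval w k = 0%N -> exists z, w = (p ^ k)%:R * z.
Proof.
elim: k w => [|k IH] w h; first by exists w; rewrite expn0 mul1r.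
have h1 : zval w 1 = 0%N by rewrite -(zval_leq w (ltn0Sn k)) h mod0n.
have [z ez] : exists z, zshift w = (p ^ k)%:R * z.
  by apply: IH; rewrite zval_shift h div0n mod0n.
by exists z; rewrite -(mulp_shift h1) ez expnS natrM mulrA.
Qed.

Lemma pcong_zval k (x y : ZP) : pcong k x y <-> zval x k = zval y k.
Proof.
split=> [[z e]|e]; last by have [z ez] := zval0_dvd (zval_sub0 e); exists z.
have -> : x = (x - y) + y by rewrite subrK.
by rewrite e zvalD zvalM zval_nat modnn mul0n mod0n add0n zval_mod.
Qed.

Lemma mulpI : injective (fun x : ZP => p%:R * x).
Proof.
move=> x y /= e; apply: zp_ext => n.
have : zval (p%:R * x) n.+1 = zval (p%:R * y) n.+1 by rewrite e.
rewrite !zvalM !zval_nat !modnMml expnS -!muln_modr ?p_gt0 //.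
by move/eqP; rewrite eqn_pmul2l ?p_gt0 // !zcompat => /eqP.
Qed.

Lemma mulpXI j : injective (fun x : ZP => (p ^ j)%:R * x).
Proof.
elim: j => [|j IH] x y /=; first by rewrite expn0 !mul1r.
by rewrite expnS natrM -!mulrA => /mulpI /IH.
Qed.

Lemma one_pcong_neq0 : ~ pcong 1 (1 : ZP) 0.
Proof.
by move/pcong_zval; rewrite zval1 zval0 expn1 modn_small // prime_gt1.
Qed.

(* Euclid's lemma, lifted from [Z/pZ] to [Z/p^N Z] one digit at a time. *)
Lemma pcong_mul0 N (x y : ZP) : pcong N (x * y) 0 -> ~ pcong 1 y 0 -> pcong N x 0.
Proof.
have euclid (w : ZP) : pcong 1 (w * y) 0 -> ~ pcong 1 y 0 -> pcong 1 w 0.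
  rewrite !pcong_zval zvalM zval0 expn1 => /eqP; rewrite -/(dvdn p _).
  rewrite Euclid_dvdM // => /orP [pw|py] ny; last first.
    by case: ny; apply/eqP; rewrite -(zval_mod y) expn1 -/(dvdn p _).
  by apply/eqP; rewrite -(zval_mod w) expn1 -/(dvdn p _).
move=> [h eh] ny; suff : forall s, (s <= N)%N -> pcong s x 0 by apply.
elim=> [|s IH] hs; first exact: pcong0.
have [w ew] := IH (ltnW hs); rewrite subr0 in ew.
have ewy : w * y = (p ^ (N - s))%:R * h.
  apply: (@mulpXI s); rewrite /= mulrA -ew mulrA -natrM -expnD subnKC ?(ltnW hs) //.
  by rewrite -eh subr0.
have [w' ew'] : pcong 1 w 0.
  apply: euclid ny; apply: (@pcong_leq _ _ 1 (N - s)); first by rewrite subn_gt0.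
  by rewrite ewy; apply: pcong_mulpX.
by exists w'; rewrite subr0 ew; move: ew'; rewrite subr0 expn1 => ->; rewrite expnSr natrM mulrA.
Qed.

Lemma idempotent_lift N (t e : ZP) :
  e * e = e -> pcong N (t * t) t -> pcong 1 t e -> pcong N t e.
Proof.
move=> ee tt te; apply/pcong_subr; apply: (@pcong_mul0 _ _ (t + e - 1)).
  have -> : (t - e) * (t + e - 1) = t * t - t - (e * e - e) by ring.
  by rewrite ee subrr subr0 -pcong_subr.
move=> h; apply: one_pcong_neq0.
have u : (2%:R * e - 1) * (2%:R * e - 1) = 1 :> ZP.
  have -> : (2%:R * e - 1) * (2%:R * e - 1) = 4%:R * (e * e - e) + 1 :> ZP by ring.
  by rewrite ee subrr mulr0 add0r.
rewrite -u; apply: pcong_mul0l; apply: pcong_trans h.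
apply: pcong_sym; apply: pcongB (pcong_refl _ _ _).
by rewrite mulr_natl mulr2n; apply: pcongD te (pcong_refl _ _ _).
Qed.


(** * The Fermat quotient and digit indicators *)

Lemma delta_eq (a : ZP) : p%:R * delta a = a - a ^+ p.
Proof.
have h : zval (a - a ^+ p) 1 = 0%N.
  by apply: zval_sub0; rewrite zvalX expn1 -{1}(zval_mod a 1) expn1 fermat_little.
by rewrite /delta /zsub zpowE mulp_shift.
Qed.

Lemma deltaD (x y : ZP) : delta (x + y) = delta x + delta y - binom_carry p x y.
Proof.
by apply: mulpI; rewrite /= delta_eq exprD_prime // !mulrDr mulrN !delta_eq; ring.
Qed.

Lemma deltaD_pX (c u : ZP) h :
  delta (c + (p ^ h.+1)%:R * u) = delta c + (p ^ h)%:R * (u - p%:R * dcorr p c h.+1 u).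
Proof.
apply: mulpI; rewrite /= delta_eq mulrDr delta_eq.
rewrite exprDn big_ord_recl subn0 expr0 mulr1 bin0 mulr1n.
have -> : \sum_(i < p) c ^+ (p - bump 0 i) * ((p ^ h.+1)%:R * u) ^+ bump 0 i *+ 'C(p, bump 0 i)
   = (p ^ h.+1)%:R * p%:R * dcorr p c h.+1 u.
  rewrite /dcorr !mulr_sumr; apply: eq_bigr => j _; rewrite /bump /= add1n.
  have coef : ('C(p, j.+1))%:R * ((p ^ h.+1)%:R) ^+ j = p%:R * (dcorr_coef p h.+1 j)%:R :> ZP.
    by rewrite -natrX -!natrM -expnM dcorr_coefE.
  rewrite -[_ *+ 'C(p, j.+1)]mulr_natr -[c ^+ _ *+ dcorr_coef _ _ _]mulr_natr exprS exprMn.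
  transitivity (c ^+ (p - j.+1) * (p ^ h.+1)%:R * u * u ^+ j *
                (('C(p, j.+1))%:R * ((p ^ h.+1)%:R) ^+ j)); first by ring.
  by rewrite coef; ring.
by rewrite expnS natrM; ring.
Qed.

Lemma pcong_delta g (x c : ZP) :
  pcong g.+1 x c <-> pcong 1 x c /\ pcong g (delta x) (delta c).
Proof.
split=> [[u eu]|[[u eu] hd]].
  have -> : x = c + (p ^ g.+1)%:R * u by rewrite -eu addrC subrK.
  split; first by apply: (@pcong_leq _ _ 1 g.+1) => //; exists u; rewrite addrC addKr.
  by rewrite deltaD_pX; exists (u - p%:R * dcorr p c g.+1 u); rewrite addrC addKr.
move: hd; have -> : x = c + (p ^ 0.+1)%:R * u by rewrite -eu addrC subrK.
rewrite deltaD_pX expn0 mul1r => hd.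
have [w ew] : pcong g u 0.
  by apply: (@pcong0_contract p _ _ c 1); move/pcong_subr: hd; rewrite addrC addKr.
by exists w; rewrite addrC addKr expn1 -(subr0 u) ew expnS natrM mulrA.
Qed.

Lemma pcong_iter_delta g (x c : ZP) :
  pcong g x c <-> (forall i, (i < g)%N -> pcong 1 (iter i delta x) (iter i delta c)).
Proof.
elim: g x c => [|g IH] x c; first by split=> // _; apply: pcong0.
rewrite pcong_delta IH; split=> [[h0 hS] [|i] hi|h]; rewrite ?iterSr //; first exact: hS.
by split=> [|i hi]; [apply: (h 0%N) | rewrite -!iterSr; apply: h].
Qed.

Definition digit_init (R : comNzRingType) (y d : R) := 1 - (y - d) ^+ p.-1.

(* Evaluated at [z = delta y] and [c = delta (- d)], [z + c - binom_carry p y (- d)]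
   is [delta (y - d)]; see [digit_init_idem]. *)
Definition digit_defect (R : comNzRingType) (y z d c : R) :=
  - ((y - d) ^+ p.-2 * (z + c - binom_carry p y (- d))).

Lemma rmorph_digit_init (R S : comNzRingType) (f : {rmorphism R -> S}) y d :
  f (digit_init y d) = digit_init (f y) (f d).
Proof. by rewrite /digit_init rmorphB rmorph1 rmorphXn rmorphB. Qed.

Lemma rmorph_digit_defect (R S : comNzRingType) (f : {rmorphism R -> S}) y z d c :
  f (digit_defect y z d c) = digit_defect (f y) (f z) (f d) (f c).
Proof.
by rewrite /digit_defect rmorphN rmorphM rmorphXn !rmorphB rmorphD rmorph_binom_carry rmorphN.
Qed.

Lemma digit_init_idem (y d : ZP) : let E := digit_init y d in
  E * E - E = p%:R * digit_defect y (delta y) d (delta (- d)).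
Proof.
rewrite /digit_init /digit_defect -deltaD mulrN mulrCA delta_eq.
have pE : p = p.-2.+2 by rewrite -addn2 -subn2 subnK // prime_gt1.
by set q := p.-2 in pE *; rewrite pE /= !exprS; ring.
Qed.

Lemma digit_init_pcong (y d : ZP) :
  (pcong 1 y d -> pcong 1 (digit_init y d) 1) /\
  (~ pcong 1 y d -> pcong 1 (digit_init y d) 0).
Proof.
have pE : p = p.-1.+1 by rewrite prednK ?prime_gt0.
rewrite [pcong _ y d]pcong_subr /digit_init; set w := y - d; split=> hw.
  have p1 : (p.-1 == 0)%N = false by apply/negbTE; rewrite -lt0n -ltnS -pE prime_gt1.
  by have := pcongB (pcong_refl _ 1 1) (pcongX p.-1 hw); rewrite expr0n p1 subr0.
have w1 : pcong 1 (w ^+ p.-1 - 1) 0.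
  apply: pcong_mul0 hw; have -> : (w ^+ p.-1 - 1) * w = - (p%:R * delta w).
    by rewrite delta_eq {2}pE exprS; ring.
  by rewrite -oppr0; apply: pcongN; have := @pcong_mulpX p _ 1 (delta w); rewrite expn1.
by have := pcongN w1; rewrite opprB oppr0.
Qed.

Lemma digit_ind_pcong (y d : ZP) k :
  let t := (newton p (digit_init y d) (digit_defect y (delta y) d (delta (- d))) k).1 in
  (pcong 1 y d -> pcong (2 ^ k) t 1) /\ (~ pcong 1 y d -> pcong (2 ^ k) t 0).
Proof.
move=> t; have rel : pcong (2 ^ k) (t * t) t.
  have := newton_rel k (digit_init_idem y d); rewrite /t.
  by case: (newton _ _ _ _) => E H /= e; exists H; rewrite e.
have t0 : pcong 1 t (digit_init y d) by apply: newton_pcong_init.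
have [h1 h0] := digit_init_pcong y d.
split=> h; apply: idempotent_lift rel (pcong_trans t0 _); rewrite ?mulr1 ?mulr0 //.
- exact: h1.
- exact: h0.
Qed.

(** * Polynomials in the jet [(a, delta a, ..., delta^m a)] *)

Variable m : nat.
Local Notation PR := {mpoly ZP[m.+1]}.

Definition jet (a : ZP) (i : 'I_m.+1) : ZP := iter i delta a.
Local Notation ev a := (meval (jet a)).

Lemma ev_X a i : (i <= m)%N -> ev a 'X_(inord i) = iter i delta a.
Proof. by move=> hi; rewrite mevalXU /jet inordK. Qed.

Definition digit_poly (i : nat) (d : ZP) k : PR :=
  (newton p (digit_init 'X_(inord i) d%:MP)
     (digit_defect 'X_(inord i) 'X_(inord i.+1) d%:MP (delta (- d))%:MP) k).1.

Lemma ev_digit_poly a i d k : (i < m)%N ->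
  ev a (digit_poly i d k) =
  (newton p (digit_init (iter i delta a) d)
     (digit_defect (iter i delta a) (delta (iter i delta a)) d (delta (- d))) k).1.
Proof.
move=> hi; rewrite /digit_poly rmorph_newton rmorph_digit_init rmorph_digit_defect /=.
by rewrite !ev_X ?mevalC // ltnW.
Qed.

(* Approximates mod [p^(2^k)] the indicator of the ball [r + p^m Z_p]: a is in
   the ball iff the first [m] digits [delta^i a mod p] agree with those of [r]. *)
Definition ball_poly (r : ZP) k : PR := \prod_(i < m) digit_poly i (iter i delta r) k.

Lemma ball_poly_pcong r k : pcong k (ball_poly r k.+1) (ball_poly r k).
Proof. by apply: pcong_prod => i _; apply: newton_pcong. Qed.

Lemma ev_ball_poly a r k :
  (pcong m a r -> pcong (2 ^ k) (ev a (ball_poly r k)) 1) /\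
  (~ pcong m a r -> pcong (2 ^ k) (ev a (ball_poly r k)) 0).
Proof.
rewrite /ball_poly rmorph_prod /=; split=> [/pcong_iter_delta h|nh].
  rewrite [X in pcong _ _ X](_ : 1 = \prod_(i < m) (1 : ZP)); last by rewrite big1_eq.
  apply: pcong_prod => i _; rewrite ev_digit_poly //.
  exact: (digit_ind_pcong _ _ k).1 (h i (ltn_ord i)).
have [i hi] : exists i : 'I_m, ~ pcong 1 (iter i delta a) (iter i delta r).
  apply/existsNP => hall; apply: nh; apply/pcong_iter_delta => i hi.
  exact: (hall (Ordinal hi)).
rewrite (bigD1 i) //=; apply: pcong_mul0l; rewrite ev_digit_poly //.
exact: (digit_ind_pcong _ _ k).2 hi.
Qed.

(* [coord_seq r u t] is defined by
   [delta^t (r + p^m u) = delta^t r + p^(m - t) coord_seq r u t]; see [iter_delta_ball]. *)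
Fixpoint coord_seq (r u : ZP) t : ZP :=
  if t is t'.+1 then
    coord_seq r u t' - p%:R * dcorr p (iter t' delta r) (m - t') (coord_seq r u t')
  else u.

Lemma iter_delta_ball a r u : a = r + (p ^ m)%:R * u -> forall t, (t <= m)%N ->
  iter t delta a = iter t delta r + (p ^ (m - t))%:R * coord_seq r u t.
Proof.
move=> ha; elim=> [|t IH] ht; first by rewrite subn0.
rewrite !iterS IH ?(ltnW ht) //.
have e : (m - t = (m - t.+1).+1)%N by rewrite subnSK.
by rewrite e deltaD_pX -e.
Qed.

(* [coord_poly r k d] approximates [coord_seq r u (m - d)] mod [p^k] at [a = r + p^m u];
   [coord_seq r u t] is recovered from [coord_seq r u t.+1] (exactly) and from itself
   (to one less digit of precision), whence the double recursion. *)
Fixpoint coord_poly (r : ZP) (k : nat) : nat -> PR :=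
  match k with
  | 0 => fun d => if d is 0 then 'X_(inord m) - (iter m delta r)%:MP else 0
  | k'.+1 => fix coord_poly_d d := match d with
      | 0 => 'X_(inord m) - (iter m delta r)%:MP
      | d'.+1 => coord_poly_d d' +
          p%:R * dcorr p (iter (m - d'.+1) delta r)%:MP d'.+1 (coord_poly r k' d'.+1)
      end
  end.

Lemma coord_poly0 r k : coord_poly r k 0 = 'X_(inord m) - (iter m delta r)%:MP.
Proof. by case: k. Qed.

Lemma coord_polyS r k d : coord_poly r k.+1 d.+1 =
  coord_poly r k.+1 d + p%:R * dcorr p (iter (m - d.+1) delta r)%:MP d.+1 (coord_poly r k d.+1).
Proof. by []. Qed.

Lemma coord_poly_pcong r k d : pcong k (coord_poly r k.+1 d) (coord_poly r k d).
Proof.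
elim: k d => [|k IH] d; first exact: pcong0.
elim: d => [|d IHd]; first by rewrite !coord_poly0; apply: pcong_refl.
rewrite coord_polyS [in X in pcong _ _ X]coord_polyS.
by apply: pcongD => //; apply: pcong_mulp; apply: pcong_dcorr; apply: IH.
Qed.

Lemma ev_coord_poly a r u : a = r + (p ^ m)%:R * u ->
  forall k d, (d <= m)%N -> pcong k (ev a (coord_poly r k d)) (coord_seq r u (m - d)).
Proof.
move=> ha; elim=> [|k IH] d hd; first exact: pcong0.
elim: d hd => [|d IHd] hd.
  rewrite coord_poly0 subn0 rmorphB /= ev_X // mevalC.
  by apply: pcong_eq; rewrite (iter_delta_ball ha (leqnn m)) subnn expn0 mul1r addrC addKr.
rewrite coord_polyS rmorphD rmorphM rmorph_nat rmorph_dcorr /= mevalC.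
have e : (m - d = (m - d.+1).+1)%N by rewrite subnSK.
have := IHd (ltnW hd); rewrite e /= subKn // => h1.
have := pcongD h1 (pcong_mulp (pcong_dcorr (iter (m - d.+1) delta r) d.+1 (IH d.+1 hd))).
by rewrite subrK.
Qed.

Lemma zval_series (x : nat -> ZP) (u : ZP) M n :
  zval (\sum_(j < M) x j * u ^+ j) n =
  ((\sum_(j < M) zval (x j) n * zval u n ^ j) %% p ^ n)%N.
Proof.
rewrite zval_sum -[RHS]modn_summ; congr (_ %% _)%N.
by apply: eq_bigr => j _; rewrite zvalM zvalX modnMmr.
Qed.

Section LocalExpansions.
Variable f : ZP -> ZP.
Variables (c : nat -> nat -> ZP) (N : nat -> nat -> nat).
Hypothesis c_small : forall r n j, (N r n <= j)%N -> zval (c r j) n = 0%N.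
Hypothesis c_eval : forall r u, eval1 (c r) u (f (r%:R + (p ^ m)%:R * u)).

Definition trunc_deg n := (\sum_(k < n.+1) \sum_(r < p ^ m) N r k)%N.

Lemma trunc_deg_ge r n : (r < p ^ m)%N -> (N r n <= trunc_deg n)%N.
Proof.
move=> hr; rewrite /trunc_deg (bigD1 (Ordinal (ltnSn n))) //= (bigD1 (Ordinal hr)) //=.
by rewrite -addnA leq_addr.
Qed.

Lemma trunc_deg_mono n : (trunc_deg n <= trunc_deg n.+1)%N.
Proof. by rewrite /trunc_deg [X in (_ <= X)%N]big_ord_recr /= leq_addr. Qed.

Lemma c_pcong0 r n j : (r < p ^ m)%N -> (trunc_deg n <= j)%N -> pcong n (c r j) 0.
Proof.
move=> hr hj; apply/pcong_zval; rewrite zval0; apply: c_small.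
exact: leq_trans (trunc_deg_ge n hr) hj.
Qed.

Definition local_poly r n : PR :=
  \sum_(j < trunc_deg n) (c r j)%:MP * coord_poly r%:R n m ^+ j.

Definition approx_poly n : PR := \sum_(r < p ^ m) ball_poly r%:R n * local_poly r n.

Lemma approx_poly_pcong n : pcong n (approx_poly n.+1) (approx_poly n).
Proof.
apply: pcong_sum => r _; apply: pcongM; first exact: ball_poly_pcong.
rewrite /local_poly (sum_ord_cat (fun j => (c r j)%:MP * coord_poly r%:R n.+1 m ^+ j)
  (trunc_deg_mono n)) -[X in pcong _ _ X]addr0.
apply: pcongD.
  apply: pcong_sum => j _; apply: pcongM (pcong_refl _ _ _) _.
  exact: pcongX (coord_poly_pcong _ _ _).
rewrite big_nat_cond; apply: pcong_sum0 => j /andP [/andP [hj _] _]; apply: pcong_mul0l.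
by have := pcong_rmorph (mpolyC m.+1 (R := ZP)) (c_pcong0 (ltn_ord r) hj); rewrite rmorph0.
Qed.

Lemma ev_local_poly a r u n : (r < p ^ m)%N -> a = r%:R + (p ^ m)%:R * u ->
  pcong n (ev a (local_poly r n)) (f a).
Proof.
move=> hr ha; rewrite /local_poly rmorph_sum /=.
apply: (@pcong_trans _ _ _ _ (\sum_(j < trunc_deg n) c r j * u ^+ j)).
  apply: pcong_sum => j _; rewrite rmorphM rmorphXn /= mevalC.
  apply: pcongM (pcong_refl _ _ _) (pcongX _ _).
  by have := ev_coord_poly ha n (leqnn m); rewrite subnn.
have [N0 hN0] := c_eval r u n.
have e1 : pcong n (f a) (\sum_(j < maxn N0 (trunc_deg n)) c r j * u ^+ j).
  by apply/pcong_zval; rewrite ha zval_series; apply: hN0 (leq_maxl _ _).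
apply: pcong_sym (pcong_trans e1 _).
rewrite (sum_ord_cat (fun j => c r j * u ^+ j) (leq_maxr N0 (trunc_deg n))) -[X in pcong _ _ X]addr0.
apply: pcongD (pcong_refl _ _ _) _.
rewrite big_nat_cond; apply: pcong_sum0 => j /andP [/andP [hj _] _].
exact: pcong_mul0l (c_pcong0 hr hj).
Qed.

(* Only the ball containing [a] contributes, and there [ball_poly] is [1]. *)
Lemma ev_approx_poly a n : pcong n (ev a (approx_poly n)) (f a).
Proof.
have ra : (zval a m < p ^ m)%N := zbound a m.
have am : pcong m a (zval a m)%:R by apply/pcong_zval; rewrite zval_nat zval_mod.
have nn : (n <= 2 ^ n)%N := ltnW (ltn_expl n (ltnSn 1)).
rewrite /approx_poly rmorph_sum /= (bigD1 (Ordinal ra)) //= -[f a]addr0.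
apply: pcongD.
  rewrite rmorphM /= -[f a]mul1r; apply: pcongM.
    exact: pcong_leq nn ((ev_ball_poly _ _ _).1 am).
  by case: am => u eu; apply: (@ev_local_poly a _ u n ra); rewrite -eu addrC subrK.
apply: pcong_sum0 => r hr; rewrite rmorphM /=; apply: pcong_mul0l.
apply: pcong_leq nn ((ev_ball_poly a _ n).2 _).
move/pcong_zval; rewrite zval_nat modn_small // => e.
by move: hr; rewrite -val_eqE /= -e eqxx.
Qed.

End LocalExpansions.

Lemma zval_meval a (Q : PR) n M : (msize Q <= M.+1)%N ->
  zval (ev a Q) n = ((\sum_(mu : 'X_{1..m.+1 < M.+1}) zval Q@_mu n *
        \prod_(i < m.+1) zval (jet a i) n ^ (mu i)) %% p ^ n)%N.
Proof.
move=> hQ; rewrite /meval (mmapE (M.+1)) // zval_sum -[RHS]modn_summ; congr (_ %% _)%N.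
apply: eq_bigr => mu _; rewrite zvalM zval_prod /= -modnMmr -modn_prodm.
rewrite modn_mod modn_prodm.
under eq_bigr => i _ do rewrite zvalX.
by rewrite modn_prodm modnMmr.
Qed.

Definition multinom_of (al : {ffun 'I_m.+1 -> nat}) : 'X_{1..m.+1} := [multinom al i | i < m.+1].

Lemma mdeg_multinom_of al : mpoly.mdeg (multinom_of al) = Defs.mdeg al.
Proof. by rewrite mdegE /Defs.mdeg; apply: eq_bigr => i _; rewrite mnmE. Qed.

(* Reindexes the sum of [zval_meval] as the one in [Defs.eval]. *)
Lemma sum_bmultinom M (G : 'X_{1..m.+1} -> nat) :
  (\sum_(mu : 'X_{1..m.+1 < M.+1}) G mu =
   \sum_(al : {ffun 'I_m.+1 -> 'I_M.+1} | (\sum_(i < m.+1) (al i : nat) <= M)%N)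
      G (multinom_of [ffun i => nat_of_ord (al i)]))%N.
Proof.
pose h (mu : 'X_{1..m.+1 < M.+1}) : {ffun 'I_m.+1 -> 'I_M.+1} := [ffun i => inord (mu i)].
pose h' (al : {ffun 'I_m.+1 -> 'I_M.+1}) : 'X_{1..m.+1 < M.+1} :=
  insubd bm0 (multinom_of [ffun i => nat_of_ord (al i)]).
have mu_le (mu : 'X_{1..m.+1 < M.+1}) i : (mu i <= M)%N.
  have := bmdeg mu; rewrite mdegE (bigD1 i) //= ltnS => /(leq_trans _); apply.
  exact: leq_addr.
have hval mu i : nat_of_ord (h mu i) = mu i by rewrite /h ffunE inordK // ltnS mu_le.
have hsum mu : (\sum_(i < m.+1) (h mu i : nat))%N = mpoly.mdeg mu.
  by rewrite mdegE; apply: eq_bigr => i _; rewrite hval.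
have hK mu : multinom_of [ffun i => nat_of_ord (h mu i)] = mu.
  by apply/mnmP => i; rewrite mnmE ffunE hval.
rewrite (reindex_onto h h').
  apply: esym; apply: eq_big => mu.
    apply/andP; split; first by rewrite hsum -ltnS bmdeg.
    have hd : (mpoly.mdeg (multinom_of [ffun i => nat_of_ord (h mu i)]) < M.+1)%N.
      by rewrite hK bmdeg.
    by apply/eqP; apply: val_inj; rewrite /h' (insubdK bm0 hd) hK.
  by move=> _; rewrite hK.
move=> al hal; apply/ffunP => i; rewrite /h /h' ffunE insubdK.
  by rewrite mnmE ffunE inord_val.
rewrite unfold_in /= mdeg_multinom_of /Defs.mdeg ltnS; move: hal; apply: leq_trans.
by rewrite leq_eqVlt; apply/orP; left; apply/eqP; apply: eq_bigr => j _; rewrite ffunE.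
Qed.

Section PolynomialLimit.
Variable f : ZP -> ZP.
Variable Q : nat -> PR.
Hypothesis Q_pcong : forall n, pcong n (Q n.+1) (Q n).
Hypothesis ev_Q : forall a n, pcong n (ev a (Q n)) (f a).

Lemma coef_compat (mu : 'X_{1..m.+1}) n :
  (zval (Q n.+1)@_mu n.+1 = zval (Q n)@_mu n %[mod p ^ n])%N.
Proof.
rewrite zcompat zval_mod; apply/pcong_zval.
have [D eD] := Q_pcong n; exists D@_mu.
by rewrite -mcoeffB eD !mulr_natl mcoeffMn.
Qed.

Definition limit_coef (al : {ffun 'I_m.+1 -> nat}) : ZP :=
  @mk p p_gt0 (fun n => zval (Q n)@_(multinom_of al) n) (fun n => coef_compat _ n).

Lemma zval_limit_coef al n : zval (limit_coef al) n = zval (Q n)@_(multinom_of al) n.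
Proof. by rewrite /= zval_mod. Qed.

Lemma arith_diff_op_limit : arith_diff_op m f.
Proof.
exists limit_coef; split=> [n|a n].
  exists (msize (Q n)) => al hal.
  rewrite zval_limit_coef memN_msupp_eq0 ?zval0 //.
  by apply: msize_mdeg_ge; rewrite mdeg_multinom_of.
exists (msize (Q n)) => M hM.
rewrite -((pcong_zval _ _ _).1 (ev_Q a n)) (@zval_meval a (Q n) n M) ?(leq_trans hM) //.
rewrite (sum_bmultinom M (fun mu => zval (Q n)@_mu n * \prod_(i < m.+1) zval (jet a i) n ^ mu i)%N).
congr (_ %% _)%N; apply: eq_bigr => al _.
rewrite zval_limit_coef; congr (_ * _)%N.
by apply: eq_bigr => i _; rewrite mnmE ffunE.
Qed.

End PolynomialLimit.

Lemma analytic_arith_diff_op (f : ZP -> ZP) : analytic_level m f -> arith_diff_op m f.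
Proof.
move=> hf; have [c hc] := choice (fun r : nat => hf r%:R).
have c_restricted r : exists Nr : nat -> nat, forall n j, (Nr n <= j)%N -> zval (c r j) n = 0%N.
  by have [Nr hNr] := choice (hc r).1; exists Nr.
have [N hN] := choice c_restricted.
have c_eval r u : eval1 (c r) u (f (r%:R + (p ^ m)%:R * u)).
  by have := (hc r).2 u; rewrite zofnatE.
exact: arith_diff_op_limit (approx_poly_pcong hN) (ev_approx_poly hN c_eval).
Qed.
End PadicIntegers.

Theorem theorem1p5 (p : nat) (hp : prime p) (m : nat) (f : Zp p -> Zp p) :
  analytic_level m f -> arith_diff_op m f.
Proof. exact: analytic_arith_diff_op. Qed.
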